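(* Let $n\geq1$ be an integer, $p>1$, $q=pe^{2\pi i/n}$, and let $A=\{a_1,\dots,a_m\}\subset\mathbb R$ be a finite nonempty set. Let $\Lambda_{n,p,A}=\{\sum_{j=1}^\infty x_jq^{-j}\mid x_j\in A\}$, let $f_i(x)=\frac1q(x+a_i)$ for $i=1,\dots,m$, and for $X\subset\mathbb C$ let $\mathcal F_{n,p,A}(X)=\bigcup_{i=1}^m f_i(X)$. Then $\Lambda_{n,p,A}$ is convex if and only if $\mathcal F_{n,p,A}(\mathrm{conv}(\Lambda_{n,p,A}))$ is convex.
   Context: $\mathrm{conv}$ denotes convex hull in $\mathbb C\cong\mathbb R^2$. *)

From Stdlib Require Import Reals List.
From Coquelicot Require Import Coquelicot.
Open Scope R_scope.

Definition qc (n : nat) (p : R) : C :=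
  (p * cos (2 * PI / INR n), p * sin (2 * PI / INR n)).

Fixpoint Cpow (z : C) (k : nat) : C :=
  match k with O => RtoC 1 | S k' => Cmult z (Cpow z k') end.

(* Lambda_{n,p,A} = { sum_{j>=1} x_j q^{-j} | x_j in A }.
   Index shift: term j (j >= 0) is x_j * q^{-(j+1)}. *)
Definition Lambda (n : nat) (p : R) (A : list R) : C -> Prop :=
  fun z => exists x : nat -> R, (forall j, In (x j) A) /\
    is_series (fun j => Cmult (RtoC (x j)) (Cinv (Cpow (qc n p) (S j)))) z.

Definition convex_set (S : C -> Prop) : Prop :=
  forall z w, S z -> S w -> forall t : R, 0 <= t <= 1 ->
    S (Cplus (Cmult (RtoC t) z) (Cmult (RtoC (1 - t)) w)).

Definition conv (S : C -> Prop) : C -> Prop :=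
  fun z => forall K : C -> Prop, convex_set K -> (forall w, S w -> K w) -> K z.

Definition fmap (n : nat) (p a : R) (x : C) : C :=
  Cdiv (Cplus x (RtoC a)) (qc n p).

Definition Fop (n : nat) (p : R) (A : list R) (X : C -> Prop) : C -> Prop :=
  fun z => exists a, In a A /\ exists x, X x /\ z = fmap n p a x.

From Pilot Require Import Defs.
From Stdlib Require Import Reals List Lra ClassicalEpsilon.
From Coquelicot Require Import Coquelicot.
Open Scope R_scope.

(* Lambda is the attractor of the IFS {f_a}: it is the fixed point of F and, since
   every f_a contracts by 1/p, every bounded set K with K ⊆ F(K) lies in Lambda
   (follow a backward F-orbit of z inside K; the digits read off along the way
   give an expansion of z).  If Lambda is convex then conv Lambda = Lambda, so
   F(conv Lambda) = F(Lambda) = Lambda.  Conversely, if F(conv Lambda) is convex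
   it contains conv F(Lambda) = conv Lambda, and conv Lambda is bounded, hence
   conv Lambda ⊆ Lambda. *)

Lemma Cmod_qc n p : Cmod (qc n p) = Rabs p.
Proof.
  unfold qc, Cmod; simpl.
  rewrite <- sqrt_Rsqr_abs; f_equal.
  pose proof (sin2_cos2 (2 * PI / INR n)); unfold Rsqr in *; nra.
Qed.

Lemma qc_neq0 n p : p <> 0 -> qc n p <> 0%C.
Proof.
  intros Hp Hq; apply Hp, Rabs_eq_0.
  now rewrite <- (Cmod_qc n p), Hq, Cmod_0.
Qed.

Lemma Cmod_Cpow (z : C) k : Cmod (Defs.Cpow z k) = Cmod z ^ k.
Proof.
  induction k as [|k IH]; simpl; [apply Cmod_1|].
  now rewrite Cmod_mult, IH.
Qed.

Lemma Cpow_neq0 (z : C) k : z <> 0%C -> Defs.Cpow z k <> 0%C.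
Proof.
  intros Hz; apply (proj2 (Cmod_gt_0 _)); rewrite Cmod_Cpow.
  now apply pow_lt, (proj1 (Cmod_gt_0 z)).
Qed.

Lemma norm_lim_le {K : AbsRing} {V : NormedModule K} (u : nat -> V) (l : V) B :
  filterlim u eventually (locally l) -> (forall k, norm (u k) <= B) -> norm l <= B.
Proof.
  intros Hu HB.
  assert (Hn : is_lim_seq (fun k => norm (u k)) (norm l)).
  { eapply filterlim_comp; [exact Hu | apply filterlim_norm]. }
  exact (is_lim_seq_le _ _ _ _ HB Hn (is_lim_seq_const B)).
Qed.

Lemma filterlim_norm_minus_le {K : AbsRing} {V : NormedModule K}
    (u : nat -> V) (l : V) (e : nat -> R) :
  (forall k, norm (minus (u k) l) <= e k) -> is_lim_seq e 0 ->
  filterlim u eventually (locally l).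
Proof.
  intros Hue He; apply filterlim_locally; intros eps.
  apply is_lim_seq_spec in He; destruct (He eps) as [N HN].
  exists N; intros k Hk; apply norm_compat1.
  specialize (HN k Hk); specialize (Hue k).
  rewrite Rminus_0_r in HN; apply Rabs_lt_between in HN; lra.
Qed.

Lemma list_abs_bound (A : list R) : exists M, 0 <= M /\ forall a, In a A -> Rabs a <= M.
Proof.
  induction A as [|b A [M [HM0 HM]]]; [exists 0; split; [lra | easy]|].
  exists (Rmax (Rabs b) M); split; [apply (Rle_trans _ M); [lra | apply Rmax_r]|].
  intros a [<- | Ha]; [apply Rmax_l|].
  apply (Rle_trans _ M); [auto | apply Rmax_r].
Qed.

Lemma convex_set_ext (S T : C -> Prop) :
  (forall z, S z <-> T z) -> convex_set S -> convex_set T.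
Proof. intros HST HS z w Hz Hw t Ht; apply HST, HS; try apply HST; auto. Qed.

Lemma conv_incl S z : S z -> conv S z.
Proof. now intros Hz K _ HK; apply HK. Qed.

Lemma conv_min (S K : C -> Prop) :
  convex_set K -> (forall z, S z -> K z) -> forall z, conv S z -> K z.
Proof. intros HK HSK z Hz; exact (Hz K HK HSK). Qed.

Lemma convex_set_conv S : convex_set (conv S).
Proof. intros z w Hz Hw t Ht K HK HSK; apply HK; [apply Hz | apply Hw | ..]; auto. Qed.

Lemma convex_set_Cmod_le B : convex_set (fun z => Cmod z <= B).
Proof.
  intros z w Hz Hw t Ht.
  eapply Rle_trans; [apply Cmod_triangle|].
  rewrite !Cmod_mult, !Cmod_R, (Rabs_pos_eq t), (Rabs_pos_eq (1 - t)) by lra.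
  nra.
Qed.

Lemma Fop_mono n p A (X Y : C -> Prop) :
  (forall z, X z -> Y z) -> forall z, Fop n p A X z -> Fop n p A Y z.
Proof. intros HXY z (a & Ha & x & Hx & ->); exists a; split; [|exists x]; auto. Qed.

Section Attractor.

Variables (n : nat) (p : R) (A : list R).
Hypothesis p_gt1 : 1 < p.

Let q := qc n p.

Definition expansion_terms (x : nat -> R) (j : nat) : C :=
  Cmult (RtoC (x j)) (Cinv (Defs.Cpow q (S j))).

Let q_neq0 : q <> 0%C.
Proof. apply qc_neq0; lra. Qed.

Let Cmod_q : Cmod q = p.
Proof. unfold q; rewrite Cmod_qc; apply Rabs_pos_eq; lra. Qed.

Lemma Lambda_fmap a w : In a A -> Lambda n p A w -> Lambda n p A (fmap n p a w).
Proof.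
  intros Ha [x [Hx Hs]].
  exists (fun j => match j with O => a | S j => x j end); split; [now intros [|j]|].
  apply is_series_decr_1.
  apply (is_series_scal (Cinv q)) in Hs.
  match goal with |- is_series _ ?L => replace L with (scal (Cinv q) w) end.
  - eapply is_series_ext; [|exact Hs]; intro k; simpl.
    change (Cinv q * (x k * Cinv (q * Defs.Cpow q k)) =
            x k * Cinv (q * (q * Defs.Cpow q k)))%C.
    pose proof (Cpow_neq0 q k q_neq0); field; auto.
  - simpl; change (Cinv q * w = Cplus (fmap n p a w) (Copp (a * Cinv (q * 1))))%C.
    unfold fmap; fold q; field; auto.
Qed.

Lemma Lambda_fmap_inv z :
  Lambda n p A z -> exists a w, In a A /\ Lambda n p A w /\ z = fmap n p a w.
Proof.
  intros [x [Hx Hs]].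
  exists (x O), (Cmult q (Cminus z (Cmult (x O) (Cinv q)))).
  split; [auto | split].
  - exists (fun j => x (S j)); split; [auto|].
    assert (Htail : is_series (fun k => expansion_terms x (S k))
                      (Cminus z (Cmult (x O) (Cinv q)))).
    { apply (is_series_incr_1 (expansion_terms x)).
      match goal with |- is_series _ ?L => replace L with z; [exact Hs|] end.
      simpl; change (z = Cplus (Cminus z (x O * Cinv q)) (x O * Cinv (q * 1)))%C.
      field; auto. }
    apply (is_series_scal q) in Htail.
    eapply is_series_ext; [|exact Htail]; intro k; simpl.
    change (q * (x (S k) * Cinv (q * (q * Defs.Cpow q k))) =
            x (S k) * Cinv (q * Defs.Cpow q k))%C.
    pose proof (Cpow_neq0 q k q_neq0); field; auto.
  - unfold fmap; fold q; field; auto.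
Qed.

Lemma Fop_Lambda z : Fop n p A (Lambda n p A) z <-> Lambda n p A z.
Proof.
  split.
  - intros (a & Ha & w & Hw & ->); now apply Lambda_fmap.
  - intros Hz; destruct (Lambda_fmap_inv z Hz) as (a & w & Ha & Hw & ->).
    exists a; split; [|exists w]; auto.
Qed.

Lemma Lambda_bounded : exists B, forall z, Lambda n p A z -> Cmod z <= B.
Proof.
  destruct (list_abs_bound A) as [M [HM0 HM]].
  exists (M / (p - 1)); intros z [x [Hx Hs]].
  assert (Hterm : forall j, Cmod (expansion_terms x j) <= M * (/ p) ^ S j).
  { intro j; unfold expansion_terms.
    rewrite Cmod_mult, Cmod_R, Cmod_inv, Cmod_Cpow, Cmod_q, <- pow_inv
      by (apply Cpow_neq0; auto).
    apply Rmult_le_compat_r; [apply pow_le, Rlt_le, Rinv_0_lt_compat; lra | auto]. }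
  assert (Hpartial : forall k,
            Cmod (sum_n (expansion_terms x) k) <= M / (p - 1) * (1 - (/ p) ^ S k)).
  { induction k as [|k IH].
    - rewrite sum_O; eapply Rle_trans; [apply Hterm|]; right; simpl; field; lra.
    - rewrite sum_Sn; eapply Rle_trans; [apply Cmod_triangle|].
      specialize (Hterm (S k)).
      replace (M / (p - 1) * (1 - (/ p) ^ S (S k)))
        with (M / (p - 1) * (1 - (/ p) ^ S k) + M * (/ p) ^ S (S k))
        by (simpl; field; lra).
      apply Rplus_le_compat; assumption. }
  apply (norm_lim_le _ _ _ Hs); intro k.
  eapply Rle_trans; [apply Hpartial|].
  assert (0 <= M / (p - 1)) by (apply Rdiv_le_0_compat; lra).
  assert (0 < (/ p) ^ S k) by (apply pow_lt, Rinv_0_lt_compat; lra).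
  nra.
Qed.

Lemma fmap_chain_expansion (d : nat -> R) (zs : nat -> C) :
  (forall k, zs k = fmap n p (d k) (zs (S k))) ->
  forall k, zs O = Cplus (sum_n (expansion_terms d) k)
                         (Cmult (Cinv (Defs.Cpow q (S k))) (zs (S k))).
Proof.
  intros Hchain k; induction k as [|k IH].
  - rewrite sum_O, (Hchain O) at 1; unfold fmap, expansion_terms; fold q; simpl.
    field; auto.
  - rewrite sum_Sn, IH, (Hchain (S k)); unfold fmap, expansion_terms; fold q.
    change (plus ?u ?v) with (Cplus u v); simpl.
    pose proof (Cpow_neq0 q k q_neq0); field; auto.
Qed.

Lemma is_series_fmap_chain (d : nat -> R) (zs : nat -> C) B :
  (forall k, zs k = fmap n p (d k) (zs (S k))) -> (forall k, Cmod (zs k) <= B) ->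
  is_series (expansion_terms d) (zs O).
Proof.
  intros Hchain HB.
  apply (filterlim_norm_minus_le _ _ (fun k => B * (/ p) ^ S k)).
  - intro k; rewrite (fmap_chain_expansion d zs Hchain k).
    change (Cmod (Cminus (sum_n (expansion_terms d) k)
              (Cplus (sum_n (expansion_terms d) k)
                 (Cmult (Cinv (Defs.Cpow q (S k))) (zs (S k))))) <= B * (/ p) ^ S k).
    replace (Cminus _ _) with (Copp (Cmult (Cinv (Defs.Cpow q (S k))) (zs (S k))))
      by ring.
    rewrite Cmod_opp, Cmod_mult, Cmod_inv, Cmod_Cpow, Cmod_q, <- pow_inv
      by (apply Cpow_neq0; auto).
    rewrite Rmult_comm; apply Rmult_le_compat_r;
      [apply pow_le, Rlt_le, Rinv_0_lt_compat; lra | auto].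
  - replace (Finite 0) with (Rbar_mult B 0) by (simpl; f_equal; ring).
    apply is_lim_seq_scal_l, (is_lim_seq_incr_1 (fun k => (/ p) ^ k)), is_lim_seq_geom.
    rewrite Rabs_pos_eq by (apply Rlt_le, Rinv_0_lt_compat; lra).
    rewrite <- Rinv_1; apply Rinv_lt_contravar; lra.
Qed.

Lemma subset_Lambda (K : C -> Prop) B :
  (forall z, K z -> Cmod z <= B) -> (forall z, K z -> Fop n p A K z) ->
  forall z, K z -> Lambda n p A z.
Proof.
  intros HB HKF z Hz.
  destruct (choice (fun w (aw : R * C) =>
              K w -> In (fst aw) A /\ K (snd aw) /\ w = fmap n p (fst aw) (snd aw)))
    as [step Hstep].
  { intros w; destruct (classic (K w)) as [Hw | Hw].
    - destruct (HKF w Hw) as (a & Ha & w' & Hw' & ->); exists (a, w'); auto.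
    - exists (0, RtoC 0); tauto. }
  set (zs k := Nat.iter k (fun w => snd (step w)) z).
  assert (HK : forall k, K (zs k)).
  { induction k as [|k IH]; [exact Hz | apply (Hstep _ IH)]. }
  exists (fun k => fst (step (zs k))); split; [intro k; apply (Hstep _ (HK k))|].
  apply (is_series_fmap_chain _ zs B); [intro k; apply (Hstep _ (HK k)) | auto].
Qed.

End Attractor.

Theorem lemma4p5 (n : nat) (p : R) (A : list R) :
  (1 <= n)%nat -> 1 < p -> A <> nil ->
  (convex_set (Lambda n p A) <-> convex_set (Fop n p A (conv (Lambda n p A)))).
Proof.
  (* Only [Cmod q = p > 1] matters. *)
  intros _ Hp _; split.
  - intros HL; apply (convex_set_ext (Lambda n p A)); [|exact HL]; intros z.
    rewrite <- Fop_Lambda by exact Hp; split.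
    + apply Fop_mono, conv_incl.
    + apply Fop_mono, conv_min; [exact HL | auto].
  - intros HF.
    assert (HKF : forall z, conv (Lambda n p A) z -> Fop n p A (conv (Lambda n p A)) z).
    { apply conv_min; [exact HF|]; intros z Hz.
      apply (Fop_mono _ _ _ (Lambda n p A)); [apply conv_incl | now apply Fop_Lambda]. }
    destruct (Lambda_bounded n p A Hp) as [B HB].
    assert (HKB : forall z, conv (Lambda n p A) z -> Cmod z <= B)
      by (apply conv_min; [apply convex_set_Cmod_le | exact HB]).
    apply (convex_set_ext (conv (Lambda n p A))); [|apply convex_set_conv]; intros z.
    split; [apply (subset_Lambda n p A Hp _ B HKB HKF) | apply conv_incl].
Qed.
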